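(* Let $\boldsymbol\alpha,\boldsymbol\beta\in\mathbb R^{\mathcal X}$ be probability vectors with $x_{\max}(\boldsymbol\alpha)=x_{\max}(\boldsymbol\beta)$, and let $r>0$. If $\mathcal Q'(\boldsymbol\alpha,r)\cap\mathcal Q'(\boldsymbol\beta,r)\neq\emptyset$, then $d(\boldsymbol\alpha,\boldsymbol\beta)\le r$.
   Context: $\mathcal X$ finite, $|\mathcal X|\ge2$. For $a\ge0,\zeta\in\mathbb R$: $d_1(a,\zeta)=|\zeta-a|$; $d_2(a,\zeta)=(\zeta-a)^2/\min(a,\zeta)$ if $a,\zeta>0$, else $\infty$; $d(a,\zeta)=\min(d_1,d_2)$; for vectors $d(\boldsymbol\alpha,\boldsymbol\zeta)=\max_{x\in\mathcal X}d(\alpha_x,\zeta_x)$. $x_{\max}(\boldsymbol\alpha)$ is an index of a largest entry of $\boldsymbol\alpha$, ties broken in an arbitrary but consistent way. Given $x_{\max}$, let $\mathcal X'=\mathcal X\setminus\{x_{\max}\}$. $\omega_\downarrow(a,r)=\max(\sqrt{r^2/4+ar}-r/2,\ r)$, $\omega'(a,r)=\omega_\downarrow(a,r)/(|\mathcal X|-1)$. The quadrant is $\mathcal Q'(\boldsymbol\alpha,r)=\{\boldsymbol\zeta'=(\zeta_x)_{x\in\mathcal X'}\in\mathbb R^{\mathcal X'}: 0\le\zeta_x-\alpha_x\le\omega'(\alpha_x,r)\ \forall x\in\mathcal X'\}$, with $x_{\max}=x_{\max}(\boldsymbol\alpha)$. *)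

From HB Require Import structures.
From mathcomp Require Import all_boot all_order all_algebra.
Set Implicit Arguments. Unset Strict Implicit. Unset Printing Implicit Defensive.
Import Order.TTheory GRing.Theory Num.Theory.
Local Open Scope ring_scope.

Section Defs.
Variables (R : rcfType) (X : finType).

Definition dist1 (a z : R) : R := `|z - a|.

(* d(a,zeta) = min(d_1, d_2), where d_2 = (zeta-a)^2/min(a,zeta) if a,zeta>0
   and d_2 = +infinity otherwise (so then d = d_1). *)
Definition dist (a z : R) : R :=
  if (0 < a) && (0 < z) then Num.min (dist1 a z) ((z - a) ^+ 2 / Num.min a z)
  else dist1 a z.

(* d(alpha,zeta) = max_x d(alpha_x, zeta_x); all terms are >= 0, so
   starting the max at 0 does not change it (X is nonempty). *)
Definition distv (al ze : X -> R) : R := \big[Num.max/0]_(x : X) dist (al x) (ze x).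

Definition prob_vec (al : X -> R) : Prop :=
  (forall x, 0 <= al x) /\ \sum_(x : X) al x = 1.

Definition is_xmax (xmax : (X -> R) -> X) : Prop :=
  forall (al : X -> R) (y : X), al y <= al (xmax al).

Definition omega_down (a r : R) : R :=
  Num.max (Num.sqrt (r ^+ 2 / 4 + a * r) - r / 2) r.

Definition omega' (a r : R) : R := omega_down a r / (#|X|.-1)%:R.

(* zeta' (given as a function on X, only its values on X' = X \ {xm} matter)
   lies in Q'(alpha, r), where xm = x_max(alpha). *)
Definition inQ' (xm : X) (al : X -> R) (r : R) (ze : X -> R) : Prop :=
  forall x, x != xm -> 0 <= ze x - al x <= omega' (al x) r.

End Defs.

From HB Require Import structures.
From mathcomp Require Import all_boot all_order all_algebra.
From mathcomp Require Import ring lra.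
Import Order.TTheory GRing.Theory Num.Theory.
Local Open Scope ring_scope.

(* omega_down a r is the largest gap b - a that the divergence d(a, b) allows
   at level r: either the gap is at most r (then d_1 <= r), or it is at most
   the positive root delta of delta^2 + r delta = a r (then d_2 <= r).  Off the
   maximal coordinate the quadrants allow gaps of omega_down / (|X| - 1); the
   two probability vectors have the same total mass, so the gap at the maximal
   coordinate is the sum of the other gaps, hence at most omega_down evaluated
   at a smaller entry, which monotonicity of omega_down in a absorbs. *)

Section OmegaDown.
Context {R : rcfType}.
Implicit Types a b d r : R.

Lemma le_omega_down a r : r <= omega_down a r.
Proof. by rewrite /omega_down le_max lexx orbT. Qed.

Lemma omega_down_ge0 a r : 0 <= r -> 0 <= omega_down a r.
Proof. by move=> r0; apply: le_trans r0 (le_omega_down a r). Qed.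

Lemma omega_root_radicand_ge0 a r : 0 <= a -> 0 <= r -> 0 <= r ^+ 2 / 4 + a * r.
Proof.
by move=> a0 r0; apply: addr_ge0; [apply: divr_ge0; rewrite ?sqr_ge0 | apply: mulr_ge0].
Qed.

Lemma omega_down_homo a b r : 0 <= r -> 0 <= a -> a <= b ->
  omega_down a r <= omega_down b r.
Proof.
move=> r0 a0 ab; rewrite /omega_down le_max2 // lerD2r ler_sqrt.
  by rewrite lerD2l; apply: ler_wpM2r.
exact: omega_root_radicand_ge0 (le_trans a0 ab) r0.
Qed.

Lemma sqr_add_mul_le_of_le_omega_root a r d : 0 <= a -> 0 <= r -> 0 <= d ->
  d <= Num.sqrt (r ^+ 2 / 4 + a * r) - r / 2 -> d ^+ 2 + d * r <= a * r.
Proof.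
move=> a0 r0 d0; set s := Num.sqrt _ => hd.
have s2 : s ^+ 2 = r ^+ 2 / 4 + a * r.
  by rewrite sqr_sqrtr ?omega_root_radicand_ge0.
have : (d + r / 2) ^+ 2 <= s ^+ 2 by rewrite lerXn2r ?nnegrE; lra.
by rewrite s2; lra.
Qed.

End OmegaDown.

Section Divergence.
Context {R : rcfType}.
Implicit Types a b r : R.

Lemma distC a b : dist a b = dist b a.
Proof. by rewrite /dist /dist1 andbC distrC -(sqrrN (b - a)) opprB (minC a b). Qed.

Lemma dist_le_dist1 a b : dist a b <= dist1 a b.
Proof. by rewrite /dist; case: ifP => _ //; rewrite ge_min lexx. Qed.

Lemma dist_le_of_le_omega_down a b r : 0 <= a -> a <= b -> 0 < r ->
  b - a <= omega_down a r -> dist a b <= r.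
Proof.
move=> a0 ab r0; have [gap_le_r _|r_lt_gap] := lerP (b - a) r.
  by apply: le_trans (dist_le_dist1 a b) _; rewrite /dist1 ger0_norm ?subr_ge0.
rewrite /omega_down le_max (leNgt _ r) r_lt_gap orbF => hgap.
have gap_sqr : (b - a) ^+ 2 + (b - a) * r <= a * r.
  by apply: sqr_add_mul_le_of_le_omega_root hgap; rewrite ?subr_ge0 // ltW.
have a_gt0 : 0 < a by nra.
rewrite /dist ifT; last by apply/andP; split; lra.
by rewrite ge_min min_l // ler_pdivrMr //; nra.
Qed.

Lemma dist_le_of_norm_le_omega_down_min a b r : 0 <= a -> 0 <= b -> 0 < r ->
  `|b - a| <= omega_down (Num.min a b) r -> dist a b <= r.
Proof.
move=> a0 b0 r0; have [ab|ba] := leP a b.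
  by rewrite ger0_norm ?subr_ge0 //; apply: dist_le_of_le_omega_down.
rewrite distrC ger0_norm ?subr_ge0 ?(ltW ba) // distC.
by apply: dist_le_of_le_omega_down => //; apply: ltW.
Qed.

End Divergence.

Lemma norm_sub_le_of_common_upper {R : realDomainType} (w : R -> R) (a b z : R) :
  0 <= z - a <= w a -> 0 <= z - b <= w b -> `|b - a| <= w (Num.min a b).
Proof.
move=> /andP[za aw] /andP[zb bw]; have [ab|ba] := leP a b.
  by rewrite ger0_norm ?subr_ge0 //; lra.
by rewrite distrC ger0_norm ?subr_ge0 ?(ltW ba); lra.
Qed.

Lemma sub_eq_sum_compl1 {R : zmodType} {X : finType} (al be : X -> R) (i : X) :
  \sum_x al x = \sum_x be x -> be i - al i = \sum_(x | x != i) (al x - be x).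
Proof.
rewrite (bigD1 i) //= [X in _ = X](bigD1 i) //= sumrB.
move/(congr1 (fun t => t - al i - \sum_(x | x != i) be x)).
by rewrite (addrC (al i)) addrK (addrAC (be i)) addrK => <-.
Qed.

Section Quadrant.
Context {R : rcfType} {X : finType}.
Hypothesis hX : (1 < #|X|)%N.

Lemma predn_card_gt0 : (0 < #|X|.-1)%N.
Proof. by rewrite -ltnS prednK // (ltn_trans _ hX). Qed.

Lemma omega'_le_omega_down (a r : R) : 0 <= r -> omega' X a r <= omega_down a r.
Proof.
move=> r0; rewrite /omega' ler_pdivrMr ?ltr0n ?predn_card_gt0 //.
by rewrite ler_peMr ?omega_down_ge0 // ler1n predn_card_gt0.
Qed.

Lemma sum_compl1_omega' (i : X) (a r : R) :
  \sum_(x | x != i) omega' X a r = omega_down a r.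
Proof.
rewrite sumr_const (cardC1 i) -mulr_natr /omega'.
by rewrite divfK // pnatr_eq0 -lt0n predn_card_gt0.
Qed.

Lemma norm_sub_le_at_argmax (al be : X -> R) (i : X) (r : R) :
  0 <= r -> (forall x, 0 <= al x) -> (forall x, 0 <= be x) ->
  \sum_x al x = \sum_x be x ->
  (forall x, Num.min (al x) (be x) <= Num.min (al i) (be i)) ->
  (forall x, x != i -> `|be x - al x| <= omega' X (Num.min (al x) (be x)) r) ->
  `|be i - al i| <= omega_down (Num.min (al i) (be i)) r.
Proof.
move=> r0 al0 be0 /(sub_eq_sum_compl1 _ _ i) -> min_le gap_le.
rewrite -(sum_compl1_omega' i); apply: le_trans (ler_norm_sum _ _ _) _.
apply: ler_sum => x xi; rewrite distrC; apply: le_trans (gap_le x xi) _.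
rewrite ler_pM2r ?invr_gt0 ?ltr0n ?predn_card_gt0 //.
by apply: omega_down_homo => //; rewrite le_min al0 be0.
Qed.

End Quadrant.

Theorem lemma5 (R : rcfType) (X : finType) (xmax : (X -> R) -> X)
  (hX : (2 <= #|X|)%N) (hxmax : is_xmax xmax)
  (al be : X -> R) (r : R)
  (hal : prob_vec al) (hbe : prob_vec be)
  (hmax : xmax al = xmax be) (hr : 0 < r)
  (hQ : exists ze : X -> R, inQ' (xmax al) al r ze /\ inQ' (xmax be) be r ze) :
  distv al be <= r.
Proof.
move: hQ hal hbe => [ze [inQa inQb]] [al0 sum_al] [be0 sum_be].
rewrite -hmax in inQb.
have gap_le x : x != xmax al ->
    `|be x - al x| <= omega' X (Num.min (al x) (be x)) r.
  move=> xi; exact: norm_sub_le_of_common_upper (omega' X ^~ r) _ _ _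
    (inQa x xi) (inQb x xi).
have min_le x : Num.min (al x) (be x) <= Num.min (al (xmax al)) (be (xmax al)).
  by rewrite le_min !ge_min hxmax hmax hxmax orbT.
rewrite /distv; apply: (big_ind (fun v => v <= r)) => [|u v ur vr|x _].
- exact: ltW.
- by rewrite ge_max ur vr.
apply: dist_le_of_norm_le_omega_down_min => //.
have [->|xi] := eqVneq x (xmax al).
  apply: (norm_sub_le_at_argmax hX) => //; first exact: ltW.
  by rewrite sum_al sum_be.
exact: le_trans (gap_le x xi) (omega'_le_omega_down hX _ _ (ltW hr)).
Qed.
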